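(* Let $R$ be the ring of upper triangular $2\times 2$ matrices over the field $\mathbb{F}_3$ (a non-commutative ring with unity of order $27$ having exactly $15$ zero-divisors, counting $0$). Consider the (left) projective line $P(R)$. Then: (i) $P(R)$ has exactly $48$ points; (ii) exactly $42$ of these points have a representative pair $(a,b)$ in which $a$ or $b$ is a unit of $R$; (iii) every point of $P(R)$ has exactly $20$ neighbours other than itself; (iv) any two distant points of $P(R)$ have exactly $6$ common neighbours; (v) any three pairwise distant points of $P(R)$ have no common neighbour; (vi) the maximum cardinality of a set of pairwise distant points of $P(R)$ is $4$. *)

From mathcomp Require Import all_boot all_algebra.
Set Implicit Arguments. Unset Strict Implicit. Unset Printing Implicit Defensive.
Import GRing.Theory.
Local Open Scope ring_scope.

Definition M := 'M['F_3]_2.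

Definition inR (A : M) : bool := A ord_max ord0 == 0.
Definition Rset : {set M} := [set A : M | inR A].

Definition unitR (a : M) : bool :=
  inR a && [exists b : M, [&& inR b, a * b == 1 & b * a == 1]].

(* 2x2 matrices over R, written as quadruples (a, b, c, d) = [[a, b], [c, d]]. *)
Definition mat2 : Type := (M * M * M * M)%type.
Definition inR2 (X : mat2) : bool :=
  let: (a, b, c, d) := X in [&& inR a, inR b, inR c & inR d].
Definition mul2 (X Y : mat2) : mat2 :=
  let: (a, b, c, d) := X in let: (e, f, g, h) := Y in
  (a * e + b * g, a * f + b * h, c * e + d * g, c * f + d * h).
Definition id2 : mat2 := (1, 0, 0, 1).
Definition GL2R (X : mat2) : bool :=
  inR2 X && [exists Y : mat2, [&& inR2 Y, mul2 X Y == id2 & mul2 Y X == id2]].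

Definition admissible (x : M * M) : bool :=
  [exists y : M * M, GL2R (x.1, x.2, y.1, y.2)].

Definition Rspan (x : M * M) : {set M * M} :=
  [set (r * x.1, r * x.2) | r in Rset].

Definition points : {set {set M * M}} :=
  [set Rspan x | x in [set x : M * M | admissible x]].

Definition distant (p q : {set M * M}) : bool :=
  [exists x : M * M, exists y : M * M,
     [&& admissible x, admissible y, p == Rspan x, q == Rspan y
       & GL2R (x.1, x.2, y.1, y.2)]].

Definition neighbour (p q : {set M * M}) : bool := ~~ distant p q.

From mathcomp Require Import all_boot all_algebra.
From mathcomp Require Import ring.
Set Implicit Arguments. Unset Strict Implicit. Unset Printing Implicit Defensive.
Import GRing.Theory.
Local Open Scope ring_scope.

(* The two diagonal entries of [[a, b], [0, c]] in R are ring characters R -> F_3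
   whose common kernel, the radical, squares to zero, so a 2x2 matrix over R is
   invertible iff both of its reductions are invertible over F_3. A point of P(R)
   is therefore given by two points of P(F_3), one per reduction, together with a
   radical coordinate in F_3 (4 * 4 * 3 = 48 points), and two points are distant iff
   both of their points of P(F_3) differ. Every statement then becomes counting in
   this model; for instance three pairwise distant points have pairwise distinct
   first and pairwise distinct second coordinates, so no point shares a coordinate
   with each of them. *)

Lemma card_set_count (T : finType) (s : seq T) (P : pred T) :
  uniq s -> (forall x, x \in s) -> #|[set x | P x]| = count P s.
Proof.
move=> Us Ts; rewrite -size_filter -(elimT card_uniqP (filter_uniq P Us)).
by apply: eq_card => x; rewrite inE mem_filter Ts andbT.
Qed.

(* (a, b, c) stands for the matrix [[a, b], [0, c]] of R. *)
Definition ut := ('F_3 * 'F_3 * 'F_3)%type.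

Definition utmx (t : ut) : M :=
  \matrix_(i, j) if i == ord0 then (if j == ord0 then t.1.1 else t.1.2)
                 else (if j == ord0 then 0 else t.2).
Definition ut_of (A : M) : ut := (A ord0 ord0, A ord0 ord_max, A ord_max ord_max).

Definition ut0 : ut := (0, 0, 0).
Definition ut1 : ut := (1, 0, 1).
Definition ut_add (s t : ut) : ut := (s.1.1 + t.1.1, s.1.2 + t.1.2, s.2 + t.2).
Definition ut_mul (s t : ut) : ut :=
  (s.1.1 * t.1.1, s.1.1 * t.1.2 + s.1.2 * t.2, s.2 * t.2).
Definition ut_inv (t : ut) : ut := (t.1.1^-1, - (t.1.1^-1 * t.1.2 * t.2^-1), t.2^-1).

Definition dg (k : bool) (t : ut) : 'F_3 := if k then t.2 else t.1.1.
Definition ut_unit (t : ut) : bool := (dg false t != 0) && (dg true t != 0).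

Lemma utmxK : cancel utmx ut_of.
Proof. by case=> [[a b] c]; rewrite /ut_of !mxE. Qed.

Lemma utmx_inj : injective utmx.
Proof. exact: can_inj utmxK. Qed.

Lemma utmx_inR t : inR (utmx t).
Proof. by rewrite /inR mxE. Qed.

Lemma ut_ofK A : inR A -> utmx (ut_of A) = A.
Proof.
by move=> /eqP A10; apply/matrixP => -[[|[|//]] ?] -[[|[|//]] ?];
  rewrite mxE /= -?A10; f_equal; exact/val_inj.
Qed.

Lemma utmx0 : utmx ut0 = 0.
Proof. by apply/matrixP => -[[|[|//]] ?] -[[|[|//]] ?]; rewrite !mxE. Qed.

Lemma utmx1 : utmx ut1 = 1.
Proof. by apply/matrixP => -[[|[|//]] ?] -[[|[|//]] ?]; rewrite !mxE. Qed.

Lemma utmxD s t : utmx s + utmx t = utmx (ut_add s t).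
Proof. by apply/matrixP => -[[|[|//]] ?] -[[|[|//]] ?]; rewrite !mxE /= ?addr0. Qed.

Lemma utmxM s t : utmx s * utmx t = utmx (ut_mul s t).
Proof.
apply/matrixP => -[[|[|//]] ?] -[[|[|//]] ?];
  by rewrite !mxE big_ord_recl big_ord1 !mxE /=; ring.
Qed.

Lemma ut_mulV t : ut_unit t -> ut_mul t (ut_inv t) = ut1 /\ ut_mul (ut_inv t) t = ut1.
Proof.
case: t => [[a b] c] /andP /= [a0 c0]; rewrite /ut_mul /ut_inv /ut1 /=.
by split; congr (_, _, _); field; rewrite ?a0 ?c0.
Qed.

Lemma dgM k s t : dg k (ut_mul s t) = dg k s * dg k t.
Proof. by case: k. Qed.

Lemma unitR_utmx t : unitR (utmx t) = ut_unit t.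
Proof.
apply/idP/idP => [/andP [_ /existsP [B /and3P [RB /eqP tB _]]] | Ut].
  move: tB; rewrite -(ut_ofK RB) utmxM -utmx1 => /utmx_inj tB.
  have nz k : dg k t * dg k (ut_of B) != 0 by rewrite -dgM tB; case: k; rewrite oner_eq0.
  move: (nz false) (nz true); rewrite !mulf_eq0 !negb_or.
  by rewrite /ut_unit => /andP [-> _] /andP [-> _].
apply/andP; split; first exact: utmx_inR.
have [tV Vt] := ut_mulV Ut; apply/existsP; exists (utmx (ut_inv t)).
by rewrite utmx_inR !utmxM tV Vt utmx1 !eqxx.
Qed.

Definition Q := (ut * ut * ut * ut)%type.

Definition utmx4 (X : Q) : mat2 :=
  let: (a, b, c, d) := X in (utmx a, utmx b, utmx c, utmx d).
Definition ut_of4 (X : mat2) : Q :=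
  let: (a, b, c, d) := X in (ut_of a, ut_of b, ut_of c, ut_of d).

Definition idq : Q := (ut1, ut0, ut0, ut1).
Definition mulq (X Y : Q) : Q :=
  let: (a, b, c, d) := X in let: (e, f, g, h) := Y in
  (ut_add (ut_mul a e) (ut_mul b g), ut_add (ut_mul a f) (ut_mul b h),
   ut_add (ut_mul c e) (ut_mul d g), ut_add (ut_mul c f) (ut_mul d h)).

Definition ddet (k : bool) (X : Q) : 'F_3 :=
  let: (a, b, c, d) := X in dg k a * dg k d - dg k b * dg k c.
Definition GL2ut (X : Q) : bool := (ddet false X != 0) && (ddet true X != 0).

Lemma utmx4K : cancel utmx4 ut_of4.
Proof. by case=> [[[a b] c] d]; rewrite /= !utmxK. Qed.

Lemma utmx4_inj : injective utmx4.
Proof. exact: can_inj utmx4K. Qed.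

Lemma ut_of4K X : inR2 X -> utmx4 (ut_of4 X) = X.
Proof. by case: X => [[[a b] c] d] /and4P [Ra Rb Rc Rd]; rewrite /= !ut_ofK. Qed.

Lemma inR2_utmx4 X : inR2 (utmx4 X).
Proof. by case: X => [[[a b] c] d]; rewrite /= !utmx_inR. Qed.

Lemma idq_utmx4 : utmx4 idq = id2.
Proof. by rewrite /= utmx0 utmx1. Qed.

Lemma mul2_utmx4 X Y : mul2 (utmx4 X) (utmx4 Y) = utmx4 (mulq X Y).
Proof.
by case: X => [[[a b] c] d]; case: Y => [[[e f] g] h]; rewrite /= !utmxM !utmxD.
Qed.

Lemma ddetM k X Y : ddet k (mulq X Y) = ddet k X * ddet k Y.
Proof. by case: X => [[[a b] c] d]; case: Y => [[[e f] g] h]; case: k => /=; ring. Qed.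

Lemma ddet1 k : ddet k idq = 1.
Proof. by case: k; rewrite /= mulr1 mulr0 subr0. Qed.

(* Writing X = D + N with D the diagonal part and N the radical part, N D^-1 N = 0
   because the radical squares to zero, so X^-1 = D^-1 - D^-1 N D^-1. In
   coordinates: the diagonal parts of X^-1 are the inverses Y0, Y1 of the two
   reductions of X and its radical part is - Y0 N Y1. *)
Definition invq (X : Q) : Q :=
  let: ((a0, an, a1), (b0, bn, b1), (c0, cn, c1), (d0, dn, d1)) := X in
  let i0 := (a0 * d0 - b0 * c0)^-1 in let i1 := (a1 * d1 - b1 * c1)^-1 in
  let y00 := i0 * d0 in let y01 := - (i0 * b0) in
  let y10 := - (i0 * c0) in let y11 := i0 * a0 in
  let z00 := i1 * d1 in let z01 := - (i1 * b1) in
  let z10 := - (i1 * c1) in let z11 := i1 * a1 in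
  let m00 := y00 * an + y01 * cn in let m01 := y00 * bn + y01 * dn in
  let m10 := y10 * an + y11 * cn in let m11 := y10 * bn + y11 * dn in
  ((y00, - (m00 * z00 + m01 * z10), z00), (y01, - (m00 * z01 + m01 * z11), z01),
   (y10, - (m10 * z00 + m11 * z10), z10), (y11, - (m10 * z01 + m11 * z11), z11)).

Lemma invqP X : GL2ut X -> mulq X (invq X) = idq /\ mulq (invq X) X = idq.
Proof.
case: X => [[[[[a0 an] a1] [[b0 bn] b1]] [[c0 cn] c1]] [[d0 dn] d1]].
rewrite /GL2ut /= => /andP [D0 D1].
by split; rewrite /= /idq /ut1 /ut0 /ut_mul /ut_add /=; congr (_, _, _, _);
  congr (_, _, _); field; rewrite ?D0 ?D1.
Qed.

Lemma GL2R_utmx4 X : GL2R (utmx4 X) = GL2ut X.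
Proof.
apply/idP/idP => [/andP [_ /existsP [Y /and3P [RY /eqP XY _]]] | GX].
  move: XY; rewrite -(ut_of4K RY) mul2_utmx4 -idq_utmx4 => /utmx4_inj XY.
  have nz k : ddet k X * ddet k (ut_of4 Y) != 0 by rewrite -ddetM XY ddet1 oner_eq0.
  move: (nz false) (nz true); rewrite !mulf_eq0 !negb_or.
  by rewrite /GL2ut => /andP [-> _] /andP [-> _].
have [XV VX] := invqP GX.
rewrite /GL2R inR2_utmx4; apply/existsP; exists (utmx4 (invq X)).
by rewrite inR2_utmx4 !mul2_utmx4 XV VX idq_utmx4 !eqxx.
Qed.

Definition utp (x : ut * ut) : M * M := (utmx x.1, utmx x.2).
Definition ut_of2 (x : M * M) : ut * ut := (ut_of x.1, ut_of x.2).
Definition rows (x y : ut * ut) : Q := (x.1, x.2, y.1, y.2).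
Definition scale (t : ut) (x : ut * ut) : ut * ut := (ut_mul t x.1, ut_mul t x.2).

Lemma utp_inj : injective utp.
Proof. by case=> [a b] [c d] [/utmx_inj -> /utmx_inj ->]. Qed.

Lemma ut_of2K x : inR x.1 -> inR x.2 -> utp (ut_of2 x) = x.
Proof. by case: x => a b Ra Rb; rewrite /utp /= !ut_ofK. Qed.

Lemma utp_scale t x : utp (scale t x) = (utmx t * (utp x).1, utmx t * (utp x).2).
Proof. by rewrite /utp /= !utmxM. Qed.

Lemma GL2R_utp x y :
  GL2R ((utp x).1, (utp x).2, (utp y).1, (utp y).2) = GL2ut (rows x y).
Proof. exact: GL2R_utmx4 (rows x y). Qed.

Lemma ddet_scale k t s x y :
  ddet k (rows (scale t x) (scale s y)) = dg k t * dg k s * ddet k (rows x y).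
Proof. by case: k => /=; ring. Qed.

Lemma GL2ut_scale t s x y : GL2ut (rows (scale t x) (scale s y)) -> GL2ut (rows x y).
Proof.
by rewrite /GL2ut !ddet_scale !mulf_eq0 !negb_or => /andP [/andP [_ ->] /andP [_ ->]].
Qed.

Definition dg_nz (k : bool) (x : ut * ut) : bool := (dg k x.1 != 0) || (dg k x.2 != 0).
Definition admissible_ut (x : ut * ut) : bool := dg_nz false x && dg_nz true x.

Lemma ddet_dg_nz k x y : ddet k (rows x y) != 0 -> dg_nz k x.
Proof.
apply: contraTT; rewrite /dg_nz negb_or !negbK => /andP [/eqP x1 /eqP x2].
by rewrite /= x1 x2 !mul0r subrr.
Qed.

Definition compl (v : 'F_3 * 'F_3) : 'F_3 * 'F_3 := if v.1 != 0 then (0, 1) else (1, 0).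

Lemma det_compl v : (v.1 != 0) || (v.2 != 0) -> v.1 * (compl v).2 - v.2 * (compl v).1 != 0.
Proof.
rewrite /compl; case: ifP => [v1 _ | /negbFE v1 /= v2] /=.
  by rewrite mulr1 mulr0 subr0.
by rewrite mulr0 mulr1 sub0r oppr_eq0.
Qed.

Definition compl_row (x : ut * ut) : ut * ut :=
  let w0 := compl (dg false x.1, dg false x.2) in
  let w1 := compl (dg true x.1, dg true x.2) in
  ((w0.1, 0, w1.1), (w0.2, 0, w1.2)).

Lemma GL2ut_compl_row x : admissible_ut x -> GL2ut (rows x (compl_row x)).
Proof. by case/andP=> x0 x1; apply/andP; split; apply: det_compl. Qed.

Lemma admissible_R x : admissible x -> x = utp (ut_of2 x).
Proof. by case/existsP=> y /andP [/and4P [Ra Rb _ _] _]; rewrite ut_of2K. Qed.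

Lemma admissible_utp x : admissible (utp x) = admissible_ut x.
Proof.
apply/idP/idP => [|Ax]; last first.
  by apply/existsP; exists (utp (compl_row x)); rewrite GL2R_utp GL2ut_compl_row.
case/existsP=> y GXY; have /and4P [_ _ Rc Rd] := proj1 (andP GXY).
move: GXY; rewrite -(ut_of2K Rc Rd) GL2R_utp => /andP [D0 D1].
by apply/andP; split; [apply: ddet_dg_nz D0 | apply: ddet_dg_nz D1].
Qed.

Lemma inR_mul a b : inR a -> inR b -> inR (a * b).
Proof. by move=> /ut_ofK <- /ut_ofK <-; rewrite utmxM utmx_inR. Qed.

Lemma mem_Rspan x : x \in Rspan x.
Proof.
apply/imsetP; exists 1; first by rewrite inE -utmx1 utmx_inR.
by rewrite !mul1r; case: x.
Qed.

Lemma Rspan_mul_sub r x : inR r -> Rspan (r * x.1, r * x.2) \subset Rspan x.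
Proof.
move=> Rr; apply/subsetP => _ /imsetP [s Rs ->]; apply/imsetP; exists (s * r).
  by move: Rs; rewrite !inE => Rs; apply: inR_mul.
by rewrite /= !mulrA.
Qed.

Lemma Rspan_mul_unit r s x :
  inR r -> inR s -> s * r = 1 -> Rspan (r * x.1, r * x.2) = Rspan x.
Proof.
move=> Rr Rs sr; apply/eqP; rewrite eqEsubset Rspan_mul_sub //=.
by have := Rspan_mul_sub (r * x.1, r * x.2) Rs; rewrite /= !mulrA sr !mul1r -surjective_pairing.
Qed.

Lemma Rspan_utpP x z : z \in Rspan (utp x) -> exists t, z = utp (scale t x).
Proof.
case/imsetP=> r; rewrite inE => Rr ->.
by exists (ut_of r); rewrite utp_scale ut_ofK.
Qed.

Lemma Rspan_scale_unit u x : ut_unit u -> Rspan (utp (scale u x)) = Rspan (utp x).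
Proof.
move=> Uu; rewrite utp_scale (@Rspan_mul_unit _ (utmx (ut_inv u))) ?utmx_inR //.
by rewrite utmxM (proj2 (ut_mulV Uu)) utmx1.
Qed.

Definition line (k : option 'F_3) : 'F_3 * 'F_3 := if k is Some a then (1, a) else (0, 1).

Lemma line_neq0 k : ((line k).1 != 0) || ((line k).2 != 0).
Proof. by case: k. Qed.

Lemma det_line_eq0 k l :
  ((line k).1 * (line l).2 - (line k).2 * (line l).1 == 0) = (k == l).
Proof.
case: k l => [a|] [b|] /=.
- by rewrite mul1r mulr1 subr_eq0 eq_sym.
- by rewrite mulr1 mulr0 subr0 oner_eq0.
- by rewrite mul0r mulr1 sub0r oppr_eq0 oner_eq0.
- by rewrite mulr0 mul0r subrr eqxx.
Qed.

Definition I := (option 'F_3 * option 'F_3 * 'F_3)%type.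

(* Normal form of a point: its two reductions are the chosen representatives [line]
   of points of P(F_3). Multiplying by the unit (1, b, 1) adds b times the lower-right
   entries to the radical entries; this clears the radical entry of the first
   coordinate when its lower-right entry is 1, and of the second one otherwise. The
   remaining radical entry r is an invariant of the point. *)
Definition rep (i : I) : ut * ut :=
  let: (k0, k1, r) := i in
  (((line k0).1, if k1 is Some _ then 0 else r, (line k1).1),
   ((line k0).2, if k1 is Some _ then r else 0, (line k1).2)).

Definition distI (i j : I) : bool := (i.1.1 != j.1.1) && (i.1.2 != j.1.2).

Lemma GL2ut_rep i j : GL2ut (rows (rep i) (rep j)) = distI i j.
Proof. by case: i j => [[k0 k1] r] [[l0 l1] s]; rewrite /GL2ut /distI /= !det_line_eq0. Qed.

Lemma admissible_rep i : admissible_ut (rep i).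
Proof. by case: i => [[k0 k1] r]; rewrite /admissible_ut /dg_nz /= !line_neq0. Qed.

Definition F3_enum : seq 'F_3 := [:: 0; 1; 2].
Definition ut_enum : seq ut :=
  [seq (ab, c) | ab <- [seq (a, b) | a <- F3_enum, b <- F3_enum], c <- F3_enum].
Definition pair_enum : seq (ut * ut) := [seq (x, y) | x <- ut_enum, y <- ut_enum].
Definition I_enum : seq I :=
  [seq (kl, r) | kl <- [seq (k, l) | k <- None :: map Some F3_enum, l <- None :: map Some F3_enum],
                 r <- F3_enum].

Lemma mem_F3_enum a : a \in F3_enum.
Proof.
by case: a => -[|[|[|//]]] ?; rewrite !inE; apply/or3P;
  [apply: Or31 | apply: Or32 | apply: Or33]; apply/eqP/val_inj.
Qed.

Lemma mem_ut_enum t : t \in ut_enum.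
Proof. by case: t => [[a b] c]; do 2?apply: allpairs_f; apply: mem_F3_enum. Qed.

Lemma mem_pair_enum x : x \in pair_enum.
Proof. by case: x => x y; apply: allpairs_f; apply: mem_ut_enum. Qed.

Lemma mem_I_enum i : i \in I_enum.
Proof.
have mem_opt (k : option 'F_3) : k \in None :: map Some F3_enum.
  by case: k => [a|]; rewrite inE // map_f ?orbT ?mem_F3_enum.
by case: i => [[k l] r]; do 2?apply: allpairs_f; rewrite ?mem_opt ?mem_F3_enum.
Qed.

Lemma uniq_I_enum : uniq I_enum.
Proof. by vm_compute. Qed.

Lemma card_setI (P : pred I) : #|[set i | P i]| = count P I_enum.
Proof. exact: card_set_count uniq_I_enum mem_I_enum. Qed.

Lemma forall_I (P : pred I) : all P I_enum -> forall i, P i.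
Proof. by move=> /allP AP i; apply: AP (mem_I_enum i). Qed.

Lemma forall_I2 (P : I -> I -> bool) :
  all (fun i => all (P i) I_enum) I_enum -> forall i j, P i j.
Proof. by move=> AP i; apply: forall_I; apply: forall_I AP i. Qed.

Definition units : seq ut := filter ut_unit ut_enum.

Lemma rep_cover_check :
  let unit_multiples := [seq scale u (rep i) | i <- I_enum, u <- units] in
  all (fun x => admissible_ut x ==> (x \in unit_multiples)) pair_enum.
Proof. by vm_compute. Qed.

Lemma exists_rep x : admissible_ut x -> exists i u, ut_unit u /\ x = scale u (rep i).
Proof.
move/(implyP (allP rep_cover_check x (mem_pair_enum x))) => /allpairsP [[i u] /= [_]].
by rewrite mem_filter => /andP [Uu _] ->; exists i, u.
Qed.

Lemma scale_rep_check :
  all (fun i => let multiples := [seq scale t (rep i) | t <- ut_enum] in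
    all (fun j => (rep j \in multiples) ==> (i == j)) I_enum) I_enum.
Proof. by vm_compute. Qed.

Lemma scale_rep_inj i j t : scale t (rep i) = rep j -> i = j.
Proof.
move=> Eij; apply/eqP/(implyP (allP (allP scale_rep_check i (mem_I_enum i)) j (mem_I_enum j))).
by rewrite -Eij (map_f (fun t => scale t (rep i))) ?mem_ut_enum.
Qed.

Definition point (i : I) : {set M * M} := Rspan (utp (rep i)).

Lemma point_in_points i : point i \in points.
Proof. by apply/imsetP; exists (utp (rep i)); rewrite // inE admissible_utp admissible_rep. Qed.

Lemma points_point p : p \in points -> exists i, p = point i.
Proof.
case/imsetP=> x; rewrite inE => Ax ->; have Ex := admissible_R Ax.
move: Ax; rewrite Ex admissible_utp.
by case/exists_rep=> i [u [Uu ->]]; exists i; rewrite Rspan_scale_unit.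
Qed.

Lemma point_inj : injective point.
Proof.
move=> i j Eij; have := mem_Rspan (utp (rep j)).
by rewrite -/(point j) -Eij => /Rspan_utpP [t /utp_inj /esym /scale_rep_inj].
Qed.

Lemma distant_point i j : distant (point i) (point j) = distI i j.
Proof.
apply/idP/idP => [/existsP [x /existsP [y /and5P [_ _ /eqP Ex /eqP Ey]]] | Dij].
  have /Rspan_utpP [t ->] : x \in point i by rewrite Ex mem_Rspan.
  have /Rspan_utpP [s ->] : y \in point j by rewrite Ey mem_Rspan.
  by rewrite GL2R_utp -GL2ut_rep => /GL2ut_scale.
apply/existsP; exists (utp (rep i)); apply/existsP; exists (utp (rep j)).
by rewrite !admissible_utp !admissible_rep !eqxx GL2R_utp GL2ut_rep.
Qed.

Lemma ut_unit_mulr t a : ut_unit (ut_mul t a) -> ut_unit a.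
Proof. by rewrite /ut_unit !dgM !mulf_eq0 !negb_or => /andP [/andP [_ ->] /andP [_ ->]]. Qed.

Definition unit_coord (x : ut * ut) : bool := ut_unit x.1 || ut_unit x.2.

Lemma point_unit_coord i :
  [exists x, (point i == Rspan x) && (unitR x.1 || unitR x.2)] = unit_coord (rep i).
Proof.
apply/existsP/idP => [[x /andP [/eqP Ex]] | U].
  have /Rspan_utpP [t ->] : x \in point i by rewrite Ex mem_Rspan.
  by rewrite /= !unitR_utmx => /orP [/ut_unit_mulr | /ut_unit_mulr] U; rewrite /unit_coord U ?orbT.
by exists (utp (rep i)); rewrite eqxx /= !unitR_utmx.
Qed.

Lemma subset_points_image (S : {set {set M * M}}) :
  S \subset points -> S = point @: [set i | point i \in S].
Proof.
move=> /subsetP SP; apply/setP => p; apply/idP/imsetP => [Sp | [i]]; last by rewrite inE => Si ->.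
by have [i Ep] := points_point (SP p Sp); exists i; rewrite // inE -Ep.
Qed.

Lemma card_points_sub (P : pred {set M * M}) :
  #|[set p in points | P p]| = #|[set i | P (point i)]|.
Proof.
have sub : [set p in points | P p] \subset points by apply/subsetP => p; rewrite inE => /andP [].
rewrite (subset_points_image sub) (card_imset _ point_inj).
by apply: eq_card => i; rewrite !inE point_in_points.
Qed.

Lemma card_near_I i : #|[set j | ~~ distI i j & j != i]| = 20%N.
Proof.
have check : all (fun i => count (fun j => ~~ distI i j && (j != i)) I_enum == 20%N) I_enum.
  by vm_compute.
by rewrite card_setI; apply/eqP/(forall_I check).
Qed.

Lemma card_common_near_I i j : distI i j -> #|[set r | ~~ distI i r & ~~ distI j r]| = 6%N.
Proof.
have check : all (fun i => all (fun j => distI i j ==>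
  (count (fun r => ~~ distI i r && ~~ distI j r) I_enum == 6%N)) I_enum) I_enum.
  by vm_compute.
by move=> Dij; rewrite card_setI; apply/eqP/(implyP (forall_I2 check i j)).
Qed.

Lemma card_unit_coord : #|[set i | unit_coord (rep i)]| = 42%N.
Proof. by rewrite card_setI; vm_compute. Qed.

Lemma no_common_near_I i j k r : distI i j -> distI i k -> distI j k ->
  ~~ [&& ~~ distI i r, ~~ distI j r & ~~ distI k r].
Proof.
rewrite /distI => /andP [ij0 ij1] /andP [ik0 ik1] /andP [jk0 jk1].
apply/negP => /and3P []; rewrite !negb_and !negbK.
by move=> /orP [/eqP ei | /eqP ei] /orP [/eqP ej | /eqP ej] /orP [/eqP ek | /eqP ek];
  move: ij0 ij1 ik0 ik1 jk0 jk1; rewrite ei ej ek eqxx.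
Qed.

Definition diagI : {set I} := [set (k, k, 0) | k : option 'F_3].

Lemma diagI_distI : {in diagI &, forall i j, i != j -> distI i j}.
Proof.
move=> _ _ /imsetP [k _ ->] /imsetP [l _ ->] ne.
by rewrite /distI /= andbb; apply: contraNneq ne => ->.
Qed.

Lemma card_diagI : #|diagI| = 4%N.
Proof.
rewrite card_imset; first by rewrite card_option card_Fp.
by move=> k l [].
Qed.

Lemma card_distI_le (S : {set I}) : {in S &, forall i j, i != j -> distI i j} -> (#|S| <= 4)%N.
Proof.
move=> DS; have inj : {in S &, injective (fun i : I => i.1.1)}.
  move=> i j Si Sj eij; apply/eqP; apply: contraTT isT => ne.
  by have := DS _ _ Si Sj ne; rewrite /distI eij eqxx.
rewrite -(card_in_imset inj); apply: leq_trans (max_card _) _.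
by rewrite card_option card_Fp.
Qed.

Lemma card_points : #|points| = 48%N.
Proof.
have -> : points = [set p in points | predT p] by apply/setP => p; rewrite inE andbT.
by rewrite card_points_sub cardsT !card_prod card_option card_Fp.
Qed.

Lemma exists_distant4 : exists S : {set {set M * M}}, [/\ S \subset points,
  {in S &, forall p q, p != q -> distant p q} & #|S| = 4%N].
Proof.
exists (point @: diagI); split.
- by apply/subsetP => _ /imsetP [i _ ->]; apply: point_in_points.
- move=> _ _ /imsetP [i Di ->] /imsetP [j Dj ->]; rewrite (inj_eq point_inj) distant_point.
  exact: diagI_distI.
- by rewrite (card_imset _ point_inj) card_diagI.
Qed.

Lemma card_distant_le (S : {set {set M * M}}) : S \subset points ->
  {in S &, forall p q, p != q -> distant p q} -> (#|S| <= 4)%N.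
Proof.
move=> /subset_points_image ES DS; rewrite ES (card_imset _ point_inj).
apply: card_distI_le => i j; rewrite !inE => Si Sj ne.
by rewrite -distant_point; apply: DS; rewrite ?(inj_eq point_inj).
Qed.

Theorem mainTheorem2 :
  (* (i) *)
  #|points| = 48%N /\
  (* (ii) *)
  #|[set p in points | [exists x : M * M,
        (p == Rspan x) && (unitR x.1 || unitR x.2)]]| = 42%N /\
  (* (iii) *)
  (forall p, p \in points ->
     #|[set q in points | neighbour p q & q != p]| = 20%N) /\
  (* (iv) *)
  (forall p q, p \in points -> q \in points -> distant p q ->
     #|[set r in points | neighbour p r & neighbour q r]| = 6%N) /\
  (* (v) *)
  (forall p q s, p \in points -> q \in points -> s \in points ->
     distant p q -> distant p s -> distant q s ->
     forall r, r \in points -> ~~ [&& neighbour p r, neighbour q r & neighbour s r]) /\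
  (* (vi) *)
  (exists S : {set {set M * M}}, [/\ S \subset points,
      {in S &, forall p q, p != q -> distant p q} & #|S| = 4%N]) /\
  (forall S : {set {set M * M}}, S \subset points ->
      {in S &, forall p q, p != q -> distant p q} -> (#|S| <= 4)%N).
Proof.
split; first exact: card_points.
split.
  rewrite card_points_sub -card_unit_coord.
  by apply: eq_card => i; rewrite !inE point_unit_coord.
split.
  move=> _ /points_point [i ->]; rewrite card_points_sub -(card_near_I i).
  by apply: eq_card => j; rewrite !inE /neighbour distant_point (inj_eq point_inj).
split.
  move=> _ _ /points_point [i ->] /points_point [j ->]; rewrite distant_point => Dij.
  rewrite card_points_sub -(card_common_near_I Dij).
  by apply: eq_card => r; rewrite !inE /neighbour !distant_point.
split.
  move=> _ _ _ /points_point [i ->] /points_point [j ->] /points_point [k ->].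
  rewrite !distant_point => Dij Dik Djk _ /points_point [r ->].
  by rewrite /neighbour !distant_point; apply: no_common_near_I.
split; [exact: exists_distant4 | exact: card_distant_le].
Qed.
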